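(* Let $U$ be a discrete group with torsion and $e\in\mathbb{C}[U]$ a nontrivial projection; let $T=et+t^{-1}e\in\mathbb{C}[U\wr\mathbb{Z}]$. For $n\ge 2$ and $1\le m\le n-1$ define $r_{m,n}=\sum_{i=1}^{n-1}\beta^{(n)}_{m,i}t^iq_n$ and $p_{m,n}=r_{m,n}r_{m,n}^*$. Then $(p_{m,n}\mid n\ge 2,\ 1\le m\le n-1)$ is a family of pairwise orthogonal projections in $\mathbb{C}[U\wr\mathbb{Z}]$ which is complete, that is, $\sum_{n\ge 2}\sum_{m=1}^{n-1}\mathrm{tr}_{U\wr\mathbb{Z}}(p_{m,n})=1$. Moreover, for $1\le m\le n-1$, $T\,p_{m,n}=\lambda_{m,n}p_{m,n}$.
   Context: $U\wr\mathbb{Z}=(\bigoplus_{i\in\mathbb{Z}}U)\rtimes C_\infty$, where $C_\infty$ is infinite cyclic with generator $t$ acting by the shift $t^{-1}((g_n)_{n})t=(g_{n-1})_n$; $U$ is identified with the subgroup of elements $(\dots,1,u,1,\dots)$ with $u$ in position $0$. A nontrivial projection means $e=e^*=e^2$, $e\ne0,1$. $\mathrm{tr}_{U\wr\mathbb{Z}}(a)$ is the coefficient of $1$ in $a\in\mathbb{C}[U\wr\mathbb{Z}]$. Put $e_i=t^{-i}et^i$, $f_i=1-e_i$, and $q_n=f_1e_2\cdots e_{n-1}f_n$ for $n\ge2$. $\lambda_{m,n}=2\cos(\frac mn\pi)$. For $n\ge 2$, $A_n$ is the $(n-1)\times(n-1)$ matrix with entries $\alpha_{i,j}=1$ if $|i-j|=1$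 and $0$ otherwise, and $B_n=(\beta^{(n)}_{i,j})_{1\le i,j\le n-1}$ is a real orthogonal matrix such that $B_nA_nB_n^*$ is the diagonal matrix with diagonal entries $\lambda_{1,n},\dots,\lambda_{n-1,n}$ in this order (these are the eigenvalues of $A_n$). *)

From HB Require Import structures.
From mathcomp Require Import all_boot all_order all_algebra zify.
From mathcomp Require Import all_classical all_reals all_analysis.
From mathcomp Require Import complex.
Import Order.TTheory GRing.Theory Num.Theory.
Import numFieldTopology.Exports numFieldNormedType.Exports.

Set Implicit Arguments.
Unset Strict Implicit.
Unset Printing Implicit Defensive.

Local Open Scope ring_scope.

(* An element (f, k) stands for  f * t^k  with f : Z -> U finitely supported. *)

Definition fin_supp (U : groupType) (f : int -> U) : Prop :=
  exists N : nat, forall n : int, (N < absz n)%N -> f n = 1%g.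

Definition wreath (U : groupType) : Type :=
  ({f : int -> U | fin_supp f} * int)%type.

Lemma fin_supp_mul (U : groupType) (f g : int -> U) (a : int) :
  fin_supp f -> fin_supp g -> fin_supp (fun n => (f n * g (n + a))%g).
Proof.
move=> [N1 H1] [N2 H2]; exists (N1 + N2 + absz a)%N => n Hn.
by rewrite H1 ?H2 ?mul1g //; lia.
Qed.

Lemma fin_supp_inv (U : groupType) (f : int -> U) (a : int) :
  fin_supp f -> fin_supp (fun n => (f (n - a))^-1%g).
Proof.
move=> [N H]; exists (N + absz a)%N => n Hn.
by rewrite H ?invg1 //; lia.
Qed.

Lemma fin_supp_one (U : groupType) : fin_supp (fun _ : int => 1%g : U).
Proof. by exists 0%N. Qed.

Lemma fin_supp_delta0 (U : groupType) (u : U) :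
  fin_supp (fun n : int => if n == 0 then u else 1%g).
Proof. by exists 0%N => n Hn; case: eqP => // En; move: Hn; rewrite En. Qed.

(* (f t^a) (g t^b) = (f * (t^a g t^-a)) t^(a+b),  (t^a g t^-a)_n = g_(n+a) *)
Definition wmul (U : groupType) (x y : wreath U) : wreath U :=
  (exist _ _ (fin_supp_mul x.2 (svalP x.1) (svalP y.1)), x.2 + y.2).

Definition winv (U : groupType) (x : wreath U) : wreath U :=
  (exist _ _ (fin_supp_inv x.2 (svalP x.1)), - x.2).

Definition wone (U : groupType) : wreath U :=
  (exist _ _ (fin_supp_one U), 0).

Definition wt (U : groupType) : wreath U :=
  (exist _ _ (fin_supp_one U), 1).

Definition wemb (U : groupType) (u : U) : wreath U :=
  (exist _ _ (fin_supp_delta0 u), 0).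

Definition wpow (U : groupType) (x : wreath U) (k : nat) : wreath U :=
  iter k (wmul x) (wone U).

(* Complex group algebra C[G] of a (discrete) group G: elements are finite   *)
(* formal linear combinations  sum_j c_j g_j  (lists of pairs (c_j, g_j)),   *)
(* two of them being equal in C[G] iff they have the same coefficients.      *)

Definition galg (C : Type) (G : Type) := seq (C * G).

Definition gcoef (C : nmodType) (G : Type) (a : galg C G) (g : G) : C :=
  \sum_(x <- a) (if `[< x.2 = g >] then x.1 else 0).

Definition ga_eq (C : nmodType) (G : Type) (a b : galg C G) : Prop :=
  forall g, gcoef a g = gcoef b g.

Definition gzero (C : Type) (G : Type) : galg C G := [::].
Definition gadd (C : Type) (G : Type) (a b : galg C G) : galg C G := a ++ b.
Definition gscale (C : ringType) (G : Type) (c : C) (a : galg C G) : galg C G :=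
  [seq (c * x.1, x.2) | x <- a].
Definition gsub (C : ringType) (G : Type) (a b : galg C G) : galg C G :=
  gadd a (gscale (-1) b).
Definition gof (C : ringType) (G : Type) (g : G) : galg C G := [:: (1, g)].
Definition gmul (C : ringType) (G : Type) (gm : G -> G -> G) (a b : galg C G)
  : galg C G := [seq (x.1 * y.1, gm x.2 y.2) | x <- a, y <- b].
Definition gstar (C : numClosedFieldType) (G : Type) (gi : G -> G)
  (a : galg C G) : galg C G := [seq ((x.1)^*, gi x.2) | x <- a].
Definition gtr (C : nmodType) (G : Type) (go : G) (a : galg C G) : C :=
  gcoef a go.
Definition gprod (C : ringType) (G : Type) (gm : G -> G -> G) (a0 : galg C G)
  (s : seq (galg C G)) : galg C G := foldl (gmul gm) a0 s.

Definition gprojection (C : numClosedFieldType) (G : Type) (gm : G -> G -> G)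
  (gi : G -> G) (e : galg C G) : Prop :=
  ga_eq (gstar gi e) e /\ ga_eq (gmul gm e e) e.

Notation CU R U := (galg (R[i]) (U : groupType)).
Notation CW R U := (galg (R[i]) (wreath (U : groupType))).

Definition Umul (U : groupType) (x y : U) : U := (x * y)%g.
Definition Uinv (U : groupType) (x : U) : U := (x^-1)%g.

Definition embU (R : realType) (U : groupType) (a : CU R U) : CW R U :=
  [seq (x.1, wemb x.2) | x <- a].

Definition WM (R : realType) (U : groupType) (a b : CW R U) : CW R U := gmul (@wmul U) a b.
Definition WS (R : realType) (U : groupType) (a : CW R U) : CW R U := gstar (@winv U) a.

Definition tpos (R : realType) (U : groupType) (i : nat) : CW R U :=
  @gof R[i] _ (wpow (wt U) i).
Definition tneg (R : realType) (U : groupType) (i : nat) : CW R U :=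
  @gof R[i] _ (wpow (winv (wt U)) i).

Definition Top (R : realType) (U : groupType) (e : CU R U) : CW R U :=
  gadd (WM (embU e) (tpos R U 1)) (WM (tneg R U 1) (embU e)).

Definition ei (R : realType) (U : groupType) (e : CU R U) (i : nat) : CW R U :=
  WM (WM (tneg R U i) (embU e)) (tpos R U i).
Definition fi (R : realType) (U : groupType) (e : CU R U) (i : nat) : CW R U :=
  gsub (@gof R[i] _ (wone U)) (ei e i).

Definition qn (R : realType) (U : groupType) (e : CU R U) (n : nat) : CW R U :=
  WM (gprod (@wmul U) (fi e 1) [seq ei e i | i <- iota 2 (n - 2)]) (fi e n).

Definition lam (R : realType) (m n : nat) : R :=
  2 * cos (m%:R / n%:R * pi).

Definition Amx (R : realType) (n : nat) : 'M[R]_(n.-1) :=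
  \matrix_(i < n.-1, j < n.-1) (if (i.+1 == j :> nat) || (j.+1 == i :> nat)
                                then 1 else 0).

(* the matrix B_n built from 1-based entries beta n i j, 1 <= i,j <= n-1 *)
Definition Bmx (R : realType) (beta : nat -> nat -> nat -> R) (n : nat)
  : 'M[R]_(n.-1) := \matrix_(i < n.-1, j < n.-1) beta n i.+1 j.+1.

Definition rmn (R : realType) (U : groupType) (e : CU R U)
  (beta : nat -> nat -> nat -> R) (m n : nat) : CW R U :=
  flatten [seq gscale ((beta n m i)%:C)%C (WM (tpos R U i) (qn e n))
          | i <- iota 1 n.-1].

Definition pmn (R : realType) (U : groupType) (e : CU R U)
  (beta : nat -> nat -> nat -> R) (m n : nat) : CW R U :=
  WM (rmn e beta m n) (WS (rmn e beta m n)).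

From HB Require Import structures.
From mathcomp Require Import all_boot all_order all_algebra zify ring lra.
From mathcomp Require Import all_classical all_reals all_analysis.
From mathcomp Require Import complex.
Import Order.TTheory GRing.Theory Num.Theory.
Import numFieldTopology.Exports numFieldNormedType.Exports.
Local Open Scope classical_set_scope.
Local Open Scope ring_scope.

Set Implicit Arguments.
Unset Strict Implicit.
Unset Printing Implicit Defensive.

(* The projections e_j = t^-j e t^j commute and t^k translates them, and this
   is all the algebra needs.  Writing q_n = f_1 e_2 ... e_(n-1) f_n, moving
   t^(j-i) through q_n shifts its factors, so q_n t^(j-i) q_n' puts some e_p
   next to its complement f_p unless i = j and n = n'.  Hence
   r_(m,n)^* r_(m',n') is the (m,m') entry of B_n B_n^T times q_n when n = n',
   and 0 otherwise: the p_(m,n) are orthogonal projections with trace tr(q_n).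
   The operator T acts on the vectors t^k q_n, 1 <= k <= n-1, through the path
   matrix A_n, which B_n diagonalises.  Finally q_n is a product of
   projections in distinct coordinates of the base group, so its trace
   factorises as (1-tau)^2 tau^(n-2) with tau = tr(e), and 0 < tau < 1 by
   faithfulness of the trace; summing (n-1)(1-tau)^2 tau^(n-2) over n gives 1. *)

Section FormalSums.
Variables (C : numClosedFieldType) (G : Type).
Implicit Types (a b : galg C G) (F : G -> C) (g h : G).

Definition gpair a F : C := \sum_(x <- a) x.1 * F x.2.

Lemma gcoef_nil g : gcoef (gzero C G) g = 0.
Proof. exact: big_nil. Qed.

Lemma gcoef_cat a b g : gcoef (a ++ b) g = gcoef a g + gcoef b g.
Proof. by rewrite /gcoef big_cat. Qed.

Lemma gcoef_scale c a g : gcoef (gscale c a) g = c * gcoef a g.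
Proof.
rewrite /gcoef big_map mulr_sumr; apply: eq_bigr => x _ /=.
by case: ifP; rewrite ?mulr0.
Qed.

Lemma gcoef_gof g h : gcoef (gof C h) g = if `[< h = g >] then 1 else 0.
Proof. by rewrite /gcoef big_seq1. Qed.

Lemma gcoef_gsub a b g : gcoef (gsub a b) g = gcoef a g - gcoef b g.
Proof. by rewrite gcoef_cat gcoef_scale mulN1r. Qed.

Lemma gcoefE a g : gcoef a g = gpair a (fun h => if `[< h = g >] then 1 else 0).
Proof. by apply: eq_bigr => x _; case: ifP; rewrite ?mulr1 ?mulr0. Qed.

Lemma gpair_cat a b F : gpair (a ++ b) F = gpair a F + gpair b F.
Proof. by rewrite /gpair big_cat. Qed.

Lemma gpair_scale c a F : gpair (gscale c a) F = c * gpair a F.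
Proof. by rewrite /gpair big_map mulr_sumr; apply: eq_bigr => x _; rewrite mulrA. Qed.

Definition gdrop a h := [seq x <- a | ~~ `[< x.2 = h >]].

Lemma gpair_split a F h : gpair a F = F h * gcoef a h + gpair (gdrop a h) F.
Proof.
rewrite /gpair /gcoef (bigID (fun x => `[< x.2 = h >])) /= big_filter.
congr (_ + _); rewrite big_mkcond mulr_sumr; apply: eq_bigr => x _.
by case: asboolP => [->|]; rewrite ?mulr0 // mulrC.
Qed.

Lemma gcoef_gdrop a h g :
  gcoef (gdrop a h) g = if `[< g = h >] then 0 else gcoef a g.
Proof.
rewrite /gcoef big_filter; case: asboolP => [->|ngh].
  by rewrite big1 // => x /asboolPn nx; case: asboolP.
rewrite [RHS](bigID (fun x => `[< x.2 = h >])) /= [X in _ = X + _]big1 ?add0r //.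
by move=> x /asboolP ->; case: asboolP => // e; case: ngh.
Qed.

(* A formal sum is a list with repetitions: induct on its length, removing all
   occurrences of the head element at once. *)
Lemma gpair_congr a F F' :
  (forall g, gcoef a g != 0 -> F g = F' g) -> gpair a F = gpair a F'.
Proof.
move: {2}(size a) (leqnn (size a)) => n; elim: n a => [|n IH] [|x a] //= Hs HF;
  try by rewrite /gpair !big_nil.
rewrite [LHS](gpair_split _ _ x.2) [RHS](gpair_split _ _ x.2); congr (_ + _).
  by have [->|/HF ->] := eqVneq (gcoef (x :: a) x.2) 0; rewrite ?mulr0.
apply: IH => [|g]; last first.
  by rewrite gcoef_gdrop; case: asboolP => _; [rewrite eqxx | exact: HF].
rewrite /gdrop /= asboolT //= size_filter.
exact: leq_trans (count_size _ _) Hs.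
Qed.

Lemma gpair_eq0 a F : (forall g, gcoef a g = 0) -> gpair a F = 0.
Proof.
move=> Ha; rewrite (@gpair_congr a F (fun=> 0)) => [|g]; last by rewrite Ha eqxx.
by rewrite /gpair big1 // => x _; rewrite mulr0.
Qed.

Lemma gpair_eq a b F : ga_eq a b -> gpair a F = gpair b F.
Proof.
move=> Hab; apply/eqP; rewrite -subr_eq0 -mulN1r -gpair_scale -gpair_cat.
by apply/eqP/gpair_eq0 => g; rewrite gcoef_cat gcoef_scale Hab mulN1r subrr.
Qed.

Lemma gpair_neq0 a F : gpair a F != 0 -> exists g, gcoef a g != 0 /\ F g != 0.
Proof.
move=> Hne; apply: contrapT => noG; move/eqP: Hne; apply.
rewrite (@gpair_congr a F (fun=> 0)) => [|g ag]; last first.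
  by apply/eqP; apply: contraT => Fg; case: noG; exists g.
by rewrite /gpair big1 // => x _; rewrite mulr0.
Qed.

Definition gsqnorm a := gpair a (fun g => (gcoef a g)^*).

Lemma gsqnorm_gt0 a : ~ ga_eq a (gzero C G) -> 0 < gsqnorm a.
Proof.
suff [ge0 eq0] : 0 <= gsqnorm a /\ (gsqnorm a = 0 -> ga_eq a (gzero C G)).
  by move=> a_neq0; rewrite lt0r ge0 andbT; apply/eqP => /eq0.
move: {2}(size a) (leqnn (size a)) => n; elim: n a => [|n IH] [|x a] //= Hs;
  try by rewrite /gsqnorm /gpair big_nil; split => // _ g.
set b := x :: a; set h := x.2.
have Hs' : (size (gdrop b h) <= n)%N.
  rewrite /gdrop /= asboolT //= size_filter; exact: leq_trans (count_size _ _) Hs.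
have [IH1 IH2] := IH _ Hs'.
have -> : gsqnorm b = (gcoef b h)^* * gcoef b h + gsqnorm (gdrop b h).
  rewrite /gsqnorm (gpair_split _ _ h); congr (_ + _).
  rewrite /gpair /gdrop !big_filter; apply: eq_bigr => y /asboolPn ny.
  by rewrite gcoef_gdrop; case: asboolP.
have P1 : 0 <= (gcoef b h)^* * gcoef b h by rewrite mulrC mul_conjC_ge0.
split; first exact: addr_ge0.
move/eqP; rewrite paddr_eq0 // => /andP[/eqP h1 /eqP /IH2 h2] g.
have c0 : gcoef b h = 0 by apply/eqP; rewrite -mul_conjC_eq0 mulrC h1.
by have := h2 g; rewrite gcoef_gdrop; case: asboolP => [->|_ //]; rewrite c0.
Qed.

Variable G' : Type.
Implicit Types f : G -> G'.

Definition gmap f a : galg C G' := [seq (x.1, f x.2) | x <- a].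

Lemma gcoef_gmap f a (k : G') :
  gcoef (gmap f a) k = gpair a (fun g => if `[< f g = k >] then 1 else 0).
Proof.
rewrite /gcoef big_map; apply: eq_bigr => x _ /=.
by case: ifP; rewrite ?mulr1 ?mulr0.
Qed.

Lemma gcoef_gmap_inj f a g : injective f -> gcoef (gmap f a) (f g) = gcoef a g.
Proof.
move=> f_inj; rewrite gcoef_gmap gcoefE; congr gpair; apply: funext => g' /=.
by case: asboolP => [/f_inj|]; case: asboolP => // ->.
Qed.

Lemma gmap_eq f a b : ga_eq a b -> ga_eq (gmap f a) (gmap f b).
Proof. by move=> Hab k; rewrite !gcoef_gmap (gpair_eq _ Hab). Qed.

End FormalSums.

Section GroupAlgebra.
Variables (C : numClosedFieldType) (G : groupType).
Implicit Types (a b : galg C G) (c d : C) (g h : G).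
Local Notation invG := (fun x : G => x^-1)%g.

Lemma gcoef_gmul_sum a b g : gcoef (gmul *%g a b) g =
  \sum_(x <- a) \sum_(y <- b) (if `[< (x.2 * y.2)%g = g >] then x.1 * y.1 else 0).
Proof. exact: big_allpairs_dep. Qed.

Lemma gcoef_gmul a b g :
  gcoef (gmul *%g a b) g = gpair a (fun h => gcoef b (h^-1 * g)%g).
Proof.
rewrite gcoef_gmul_sum /gpair; apply: eq_bigr => x _.
rewrite mulr_sumr; apply: eq_bigr => y _ /=.
have -> : ((x.2 * y.2)%g = g) = (y.2 = (x.2^-1 * g)%g).
  by apply/propext; split => [<-|->]; rewrite ?mulKg ?mulVKg.
by case: ifP; rewrite ?mulr0.
Qed.

Lemma gmul_eq a a' b b' :
  ga_eq a a' -> ga_eq b b' -> ga_eq (gmul *%g a b) (gmul *%g a' b').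
Proof.
move=> Ha Hb g; rewrite !gcoef_gmul (gpair_eq _ Ha); congr gpair.
by apply: funext => h; rewrite Hb.
Qed.

Lemma gcoef_gstar a g : gcoef (gstar invG a) g = (gcoef a g^-1%g)^*.
Proof.
rewrite /gcoef /gstar big_map rmorph_sum; apply: eq_bigr => x _ /=.
have -> : ((x.2^-1)%g = g) = (x.2 = (g^-1)%g).
  by apply/propext; split => [<-|->]; rewrite invgK.
by case: ifP; rewrite ?rmorph0.
Qed.

(* C[G] is the quotient of formal sums by [ga_eq], each element being
   represented by its coefficient function. *)
Record grpalg := GrpAlg { coef : G -> C ; coefP : exists a : galg C G, gcoef a = coef }.

Implicit Types p q : grpalg.

HB.instance Definition _ := gen_eqMixin grpalg.
HB.instance Definition _ := gen_choiceMixin grpalg.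

Definition cl a : grpalg := @GrpAlg (gcoef a) (ex_intro _ a erefl).
Definition rep (q : grpalg) : galg C G := projT1 (cid (coefP q)).

Lemma coef_inj : injective coef.
Proof. by case=> f fP [g gP] /= efg; subst g; congr GrpAlg; exact: Prop_irrelevance. Qed.

Lemma coef_cl a : coef (cl a) = gcoef a.
Proof. by []. Qed.

Lemma gcoef_rep q : gcoef (rep q) = coef q.
Proof. exact: projT2 (cid (coefP q)). Qed.

Lemma repK : cancel rep cl.
Proof. by move=> q; apply: coef_inj; rewrite coef_cl gcoef_rep. Qed.

Lemma clP a b : cl a = cl b <-> ga_eq a b.
Proof.
by split=> [/(congr1 coef) /= Hab g | /funext Hab]; [rewrite Hab | exact: coef_inj].
Qed.

Lemma grpalg_ind (P : grpalg -> Prop) : (forall a, P (cl a)) -> forall q, P q.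
Proof. by move=> Pcl q; rewrite -(repK q). Qed.

Definition ga_add p q := cl (rep p ++ rep q).
Definition ga_opp p := cl (gscale (-1) (rep p)).

Lemma cl_ga_add a b : cl (a ++ b) = ga_add (cl a) (cl b).
Proof. by apply/clP => g; rewrite !gcoef_cat !gcoef_rep. Qed.

Lemma cl_ga_opp a : cl (gscale (-1) a) = ga_opp (cl a).
Proof. by apply/clP => g; rewrite !gcoef_scale !gcoef_rep. Qed.

Lemma ga_addA : associative ga_add.
Proof.
by elim/grpalg_ind=> a; elim/grpalg_ind=> b; elim/grpalg_ind=> c; rewrite -!cl_ga_add catA.
Qed.

Lemma ga_addC : commutative ga_add.
Proof.
elim/grpalg_ind=> a; elim/grpalg_ind=> b; rewrite -!cl_ga_add; apply/clP => g.
by rewrite !gcoef_cat addrC.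
Qed.

Lemma ga_add0 : left_id (cl [::]) ga_add.
Proof. by elim/grpalg_ind=> a; rewrite -cl_ga_add. Qed.

Lemma ga_addN : left_inverse (cl [::]) ga_opp ga_add.
Proof.
elim/grpalg_ind=> a; rewrite -cl_ga_opp -cl_ga_add; apply/clP => g.
by rewrite gcoef_cat gcoef_scale mulN1r addNr (gcoef_nil C).
Qed.

HB.instance Definition _ := GRing.isZmodule.Build grpalg ga_addA ga_addC ga_add0 ga_addN.

Lemma cl_nil : cl [::] = 0. Proof. by []. Qed.
Lemma cl_cat a b : cl (a ++ b) = cl a + cl b. Proof. exact: cl_ga_add. Qed.

Definition ga_scale c q := cl (gscale c (rep q)).

Lemma cl_ga_scale c a : cl (gscale c a) = ga_scale c (cl a).
Proof. by apply/clP => g; rewrite !gcoef_scale gcoef_rep. Qed.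

Lemma ga_scaleA c d q : ga_scale c (ga_scale d q) = ga_scale (c * d) q.
Proof.
elim/grpalg_ind: q => a; rewrite -!cl_ga_scale; apply/clP => g.
by rewrite !gcoef_scale mulrA.
Qed.

Lemma ga_scale1 : left_id 1 ga_scale.
Proof.
by elim/grpalg_ind=> a; rewrite -cl_ga_scale; apply/clP => g; rewrite gcoef_scale mul1r.
Qed.

Lemma ga_scaleDr : right_distributive ga_scale +%R.
Proof.
move=> c; elim/grpalg_ind=> a; elim/grpalg_ind=> b.
rewrite -cl_cat -!cl_ga_scale -cl_cat; apply/clP => g.
by rewrite !(gcoef_cat, gcoef_scale) mulrDr.
Qed.

Lemma ga_scaleDl q : {morph ga_scale^~ q : c d / c + d}.
Proof.
elim/grpalg_ind: q => a c d; rewrite -!cl_ga_scale -cl_cat; apply/clP => g.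
by rewrite !(gcoef_cat, gcoef_scale) mulrDl.
Qed.

HB.instance Definition _ :=
  GRing.Zmodule_isLmodule.Build C grpalg ga_scaleA ga_scale1 ga_scaleDr ga_scaleDl.

Lemma clZ c a : cl (gscale c a) = c *: cl a. Proof. exact: cl_ga_scale. Qed.
Lemma clN a : cl (gscale (-1) a) = - cl a. Proof. exact: cl_ga_opp. Qed.

Lemma cl_gsub a b : cl (gsub a b) = cl a - cl b.
Proof. by rewrite /gsub /gadd cl_cat clN. Qed.

Definition ga_mul p q := cl (gmul *%g (rep p) (rep q)).

Lemma cl_ga_mul a b : cl (gmul *%g a b) = ga_mul (cl a) (cl b).
Proof. by apply/clP; apply: gmul_eq => g; rewrite gcoef_rep. Qed.

Lemma ga_mulA : associative ga_mul.
Proof.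
elim/grpalg_ind=> a; elim/grpalg_ind=> b; elim/grpalg_ind=> c.
rewrite -!cl_ga_mul; apply/clP => g; rewrite !gcoef_gmul_sum /gmul big_allpairs_dep.
apply: eq_bigr => x _; rewrite big_allpairs_dep; apply: eq_bigr => y _.
by apply: eq_bigr => z _; rewrite /= mulgA mulrA.
Qed.

Lemma ga_mul1q : left_id (cl (gof C 1%g)) ga_mul.
Proof.
elim/grpalg_ind=> a; rewrite -cl_ga_mul; apply/clP => g.
by rewrite gcoef_gmul /gpair big_seq1 mul1r invg1 mul1g.
Qed.

Lemma ga_mulq1 : right_id (cl (gof C 1%g)) ga_mul.
Proof.
elim/grpalg_ind=> a; rewrite -cl_ga_mul; apply/clP => g.
rewrite /gcoef /gmul big_allpairs_dep; apply: eq_bigr => x _.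
by rewrite big_seq1 /= mulg1 mulr1.
Qed.

Lemma ga_mulDl : left_distributive ga_mul +%R.
Proof.
elim/grpalg_ind=> a; elim/grpalg_ind=> b; elim/grpalg_ind=> c.
rewrite -cl_cat -!cl_ga_mul -cl_cat; apply/clP => g.
by rewrite /gmul allpairs_cat gcoef_cat.
Qed.

Lemma ga_mulDr : right_distributive ga_mul +%R.
Proof.
elim/grpalg_ind=> a; elim/grpalg_ind=> b; elim/grpalg_ind=> c.
rewrite -cl_cat -!cl_ga_mul -cl_cat; apply/clP => g.
rewrite gcoef_cat !gcoef_gmul_sum -big_split; apply: eq_bigr => x _.
by rewrite big_cat.
Qed.

Lemma ga_one_neq0 : cl (gof C 1%g) != 0.
Proof.
apply/eqP => /clP /(_ 1%g); rewrite gcoef_gof gcoef_nil asboolT //.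
by move/eqP; rewrite oner_eq0.
Qed.

HB.instance Definition _ := GRing.Zmodule_isNzRing.Build grpalg
  ga_mulA ga_mul1q ga_mulq1 ga_mulDl ga_mulDr ga_one_neq0.

Lemma clM a b : cl (gmul *%g a b) = cl a * cl b. Proof. exact: cl_ga_mul. Qed.
Lemma cl1 : cl (gof C 1%g) = 1. Proof. by []. Qed.

Lemma cl_gof_mul g h : cl (gof C (g * h)%g) = cl (gof C g) * cl (gof C h).
Proof. by rewrite -clM /gmul /= mulr1. Qed.

Lemma ga_scaleAl c p q : c *: (p * q) = (c *: p) * q.
Proof.
elim/grpalg_ind: p => a; elim/grpalg_ind: q => b.
rewrite -clM -!clZ -clM; apply/clP => g.
rewrite gcoef_scale !gcoef_gmul_sum /gscale big_map mulr_sumr; apply: eq_bigr => x _.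
by rewrite mulr_sumr; apply: eq_bigr => y _ /=; case: ifP; rewrite ?mulr0 ?mulrA.
Qed.

Lemma ga_scaleAr c p q : c *: (p * q) = p * (c *: q).
Proof.
elim/grpalg_ind: p => a; elim/grpalg_ind: q => b.
rewrite -clM -!clZ -clM; apply/clP => g.
rewrite gcoef_scale !gcoef_gmul_sum mulr_sumr; apply: eq_bigr => x _.
rewrite /gscale big_map mulr_sumr; apply: eq_bigr => y _ /=.
by case: ifP; rewrite ?mulr0 // mulrCA.
Qed.

HB.instance Definition _ := GRing.Lmodule_isLalgebra.Build C grpalg ga_scaleAl.
HB.instance Definition _ := GRing.Lalgebra_isAlgebra.Build C grpalg ga_scaleAr.

Lemma cl_gprod a0 (s : seq (galg C G)) :
  cl (gprod *%g a0 s) = cl a0 * \prod_(a <- s) cl a.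
Proof.
elim: s a0 => [|a s IH] a0; first by rewrite big_nil mulr1.
by rewrite /gprod /= -/(gprod _ _ s) IH clM big_cons mulrA.
Qed.

Lemma cl_flatten (I : Type) (s : seq I) (F : I -> galg C G) :
  cl (flatten [seq F i | i <- s]) = \sum_(i <- s) cl (F i).
Proof. by elim: s => [|i s IH]; rewrite ?big_nil ?big_cons //= cl_cat IH. Qed.

Lemma coef_mul p q g : coef (p * q) g = gpair (rep p) (fun h => coef q (h^-1 * g)%g).
Proof.
rewrite -{1}(repK p) -{1}(repK q) -clM coef_cl gcoef_gmul; congr gpair.
by apply: funext => h; rewrite gcoef_rep.
Qed.

Definition star q := cl (gstar invG (rep q)).

Lemma cl_gstar a : cl (gstar invG a) = star (cl a).
Proof. by apply/clP => g; rewrite !gcoef_gstar gcoef_rep. Qed.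

Lemma starM p q : star (p * q) = star q * star p.
Proof.
elim/grpalg_ind: p => a; elim/grpalg_ind: q => b.
rewrite -clM -!cl_gstar -clM; apply/clP => g.
rewrite gcoef_gstar !gcoef_gmul_sum /gstar big_map rmorph_sum exchange_big big_map /=.
apply: eq_bigr => x _; rewrite rmorph_sum; apply: eq_bigr => y _ /=.
have -> : ((x.2 * y.2)%g = (g^-1)%g) = ((y.2^-1 * x.2^-1)%g = g).
  by apply/propext; rewrite -invgM; split => [->|<-]; rewrite invgK.
by case: ifP; rewrite ?rmorph0 // rmorphM mulrC.
Qed.

Lemma gprojectionP a :
  gprojection *%g invG a <-> star (cl a) = cl a /\ cl a * cl a = cl a.
Proof. by rewrite -cl_gstar -clM; split=> [[/clP ? /clP ?]|[/clP ? /clP ?]]. Qed.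

Lemma starK : involutive star.
Proof.
elim/grpalg_ind=> a; rewrite -!cl_gstar; apply/clP => g.
by rewrite !gcoef_gstar conjCK invgK.
Qed.

Lemma starD p q : star (p + q) = star p + star q.
Proof.
elim/grpalg_ind: p => a; elim/grpalg_ind: q => b.
by rewrite -cl_cat -!cl_gstar -cl_cat /gstar map_cat.
Qed.

Lemma star0 : star 0 = 0.
Proof. by rewrite -cl_nil -cl_gstar. Qed.

Lemma starB p q : star (p - q) = star p - star q.
Proof. by apply: (addIr (star q)); rewrite -starD !subrK. Qed.

Lemma star1 : star 1 = 1.
Proof. by rewrite -cl1 -cl_gstar /gstar /= conjC1 invg1. Qed.

Lemma starZ c q : star (c *: q) = c^* *: star q.
Proof.
elim/grpalg_ind: q => a; rewrite -clZ -!cl_gstar -clZ; apply/clP => g.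
by rewrite gcoef_gstar !gcoef_scale gcoef_gstar rmorphM.
Qed.

Lemma star_sum (I : Type) (s : seq I) (F : I -> grpalg) :
  star (\sum_(i <- s) F i) = \sum_(i <- s) star (F i).
Proof. exact: (big_morph star starD star0). Qed.

Definition trace q := coef q 1%g.

Lemma trace_cl a : trace (cl a) = gcoef a 1%g.
Proof. by []. Qed.

Lemma trace1 : trace 1 = 1.
Proof. by rewrite -cl1 trace_cl gcoef_gof asboolT. Qed.

Lemma traceC p q : trace (p * q) = trace (q * p).
Proof.
elim/grpalg_ind: p => a; elim/grpalg_ind: q => b; rewrite -!clM !trace_cl !gcoef_gmul_sum.
rewrite exchange_big; apply: eq_bigr => y _; apply: eq_bigr => x _.
have -> : ((x.2 * y.2)%g = 1%g) = ((y.2 * x.2)%g = 1%g).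
  by apply/propext; split => /eqP; rewrite mulg_eq1 => /eqP ->; rewrite mulgV.
by rewrite mulrC.
Qed.

Lemma trace_mul_star a : trace (cl a * star (cl a)) = gsqnorm a.
Proof.
rewrite -cl_gstar -clM trace_cl gcoef_gmul /gsqnorm; congr gpair; apply: funext => h.
by rewrite gcoef_gstar mulg1 invgK.
Qed.

Lemma trace_proj_gt0 p : p * p = p -> star p = p -> p != 0 -> 0 < trace p.
Proof.
elim/grpalg_ind: p => a idem sa a_neq0.
rewrite -{1}idem -{2}sa trace_mul_star gsqnorm_gt0 // => /clP ca0.
by move/eqP: a_neq0; apply.
Qed.

Variable G' : groupType.
Implicit Types f : G' -> G.

Definition map_galg f (a : galg C G') : grpalg := cl (gmap f a).

Lemma map_galg_eq f (a b : galg C G') : ga_eq a b -> map_galg f a = map_galg f b.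
Proof. by move=> Hab; apply/clP/gmap_eq. Qed.

Lemma map_galgM f (a b : galg C G') : {morph f : x y / (x * y)%g} ->
  map_galg f (gmul *%g a b) = map_galg f a * map_galg f b.
Proof.
move=> fM; rewrite -clM /map_galg /gmap /gmul; congr cl.
rewrite map_allpairs allpairs_mapl allpairs_mapr.
by apply: eq_allpairs => x y /=; rewrite fM.
Qed.

Lemma map_galg_star f (a : galg C G') : {morph f : x / (x^-1)%g} ->
  map_galg f (gstar (fun x : G' => x^-1)%g a) = star (map_galg f a).
Proof.
move=> fV; rewrite -cl_gstar /map_galg /gmap /gstar -!map_comp.
by congr cl; apply: eq_map => x /=; rewrite fV.
Qed.

Lemma map_galg1 f : f 1%g = 1%g -> map_galg f (gof C 1%g) = 1.
Proof. by rewrite /map_galg /= => ->. Qed.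

Lemma map_galgB f (a b : galg C G') : map_galg f (gsub a b) = map_galg f a - map_galg f b.
Proof. by rewrite /map_galg -cl_gsub /gmap /gsub /gadd /gscale map_cat -!map_comp. Qed.

Lemma coef_map_galg f (a : galg C G') (u : G') :
  injective f -> coef (map_galg f a) (f u) = gcoef a u.
Proof. exact: gcoef_gmap_inj. Qed.

Lemma trace_map_galg f (a : galg C G') :
  injective f -> f 1%g = 1%g -> trace (map_galg f a) = gcoef a 1%g.
Proof. by move=> f_inj f1; rewrite /trace -f1 coef_map_galg. Qed.

Lemma coef_map_galg_neq0 f (a : galg C G') g :
  coef (map_galg f a) g != 0 -> exists u, f u = g.
Proof.
rewrite coef_cl gcoef_gmap => /gpair_neq0 [u [_]].
by case: asboolP => [<- _|]; [exists u | rewrite eqxx].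
Qed.

Lemma map_galg_eq0 f (a : galg C G') :
  injective f -> map_galg f a = 0 -> ga_eq a (gzero C G').
Proof.
by move=> f_inj fa0 u; rewrite gcoef_nil -(coef_map_galg a u f_inj) fa0; exact: gcoef_nil.
Qed.

Lemma map_galg_comm f f' (a b : galg C G') :
  (forall u v, (f u * f' v = f' v * f u)%g) -> GRing.comm (map_galg f a) (map_galg f' b).
Proof.
move=> ff'; rewrite /GRing.comm /map_galg -!clM; apply/clP => g.
rewrite !gcoef_gmul_sum /gmap !big_map exchange_big big_map /=; apply: eq_bigr => y _.
by rewrite big_map; apply: eq_bigr => x _ /=; rewrite ff' mulrC.
Qed.

Lemma gof_map_galg g f f' (a : galg C G') : (forall u, (g * f u = f' u * g)%g) ->
  cl (gof C g) * map_galg f a = map_galg f' a * cl (gof C g).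
Proof.
move=> gf; rewrite /map_galg -!clM /gmul /gmap allpairs1l allpairs1r -!map_comp.
by congr cl; apply: eq_map => x /=; rewrite mul1r mulr1 gf.
Qed.

End GroupAlgebra.

Record translated_projections (A : nzRingType) (E T : int -> A) : Prop := {
  tp_idem : forall j, E j * E j = E j;
  tp_comm : forall i j, GRing.comm (E i) (E j);
  tp_shiftD : forall k l, T (k + l) = T k * T l;
  tp_shift0 : T 0 = 1;
  tp_shift_proj : forall k j, T k * E j = E (j - k) * T k }.

Section TranslatedProjections.
Variables (A : nzRingType) (E T : int -> A).
Hypothesis ET : translated_projections E T.
Let E_idem := tp_idem ET.
Let E_comm := tp_comm ET.
Let TD := tp_shiftD ET.
Let T0 := tp_shift0 ET.
Let T_E := tp_shift_proj ET.

Definition coE j := 1 - E j.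
Definition prodE n := \prod_(i <- iota 2 (n - 2)) E i%:Z.
Definition qE n := coE 1 * prodE n * coE n%:Z.
Definition hopping := E 0 * T 1 + T (-1) * E 0.

Lemma E_coE j : E j * coE j = 0.
Proof. by rewrite /coE mulrBr mulr1 E_idem subrr. Qed.

Lemma coE_E j : coE j * E j = 0.
Proof. by rewrite /coE mulrBl mul1r E_idem subrr. Qed.

Lemma coE_idem j : coE j * coE j = coE j.
Proof. by rewrite {1}/coE mulrBl mul1r E_coE subr0. Qed.

Lemma T_coE k j : T k * coE j = coE (j - k) * T k.
Proof. by rewrite /coE mulrBl mulrBr mul1r mulr1 T_E. Qed.

Lemma coE_T j k : coE j * T k = T k * coE (j + k).
Proof. by rewrite T_coE addrK. Qed.

Lemma E_T j k : E j * T k = T k * E (j + k).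
Proof. by rewrite T_E addrK. Qed.

Lemma comm_coE i j : GRing.comm (coE i) (E j).
Proof. by apply/commr_sym/commrB; [exact: commr1 | exact: E_comm]. Qed.

Lemma comm_prodE (s : seq nat) j : GRing.comm (\prod_(i <- s) E i%:Z) (E j).
Proof. by apply/commr_sym/commr_prod => i _; exact: E_comm. Qed.

Lemma comm_qE n j : GRing.comm (qE n) (E j).
Proof.
by apply/commr_sym/commrM; [apply/commrM|]; apply/commr_sym;
  first [exact: comm_coE | exact: comm_prodE].
Qed.

Lemma comm_qE_coE n j : GRing.comm (qE n) (coE j).
Proof. by apply/commrB; [exact: commr1 | exact: comm_qE]. Qed.

Lemma comm_coE_coE i j : GRing.comm (coE i) (coE j).
Proof. by apply: commrB; [exact: commr1 | exact: comm_coE]. Qed.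

Lemma comm_prodE_coE (s : seq nat) j : GRing.comm (\prod_(i <- s) E i%:Z) (coE j).
Proof. by apply: commrB; [exact: commr1 | exact: comm_prodE]. Qed.

Lemma qE_rev n : qE n = coE n%:Z * prodE n * coE 1.
Proof.
rewrite /qE -mulrA comm_prodE_coE mulrA comm_coE_coE -mulrA.
by rewrite -comm_prodE_coE mulrA.
Qed.

Lemma prodE_absorb (s : seq nat) j : j \in s ->
  (\prod_(i <- s) E i%:Z) * E j%:Z = \prod_(i <- s) E i%:Z.
Proof.
elim: s => [|i s IH] //; rewrite in_cons big_cons => /orP[/eqP ->|js].
  by rewrite -mulrA (comm_prodE s) mulrA E_idem.
by rewrite -mulrA IH.
Qed.

Lemma qE_E n p : (2 <= n)%N -> (1 <= p <= n)%N ->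
  qE n * E p%:Z = if (1 < p < n)%N then qE n else 0.
Proof.
move=> n2 /andP[p1 pn]; case: ifP => [/andP[p2 pn']|].
  rewrite /qE -mulrA (comm_coE n%:Z) mulrA -(mulrA (coE 1)) /prodE prodE_absorb //.
  by rewrite mem_iota; lia.
have [-> _|p1' /negbT np] := eqVneq p 1%N.
  by rewrite comm_qE /qE !mulrA E_coE !mul0r.
have -> : p = n by lia.
by rewrite /qE -mulrA coE_E mulr0.
Qed.

Lemma E_qE n p : (2 <= n)%N -> (1 <= p <= n)%N ->
  E p%:Z * qE n = if (1 < p < n)%N then qE n else 0.
Proof. by move=> n2 p1n; rewrite -comm_qE qE_E. Qed.

Lemma qE_coE n p : (2 <= n)%N -> (1 <= p <= n)%N ->
  qE n * coE p%:Z = if (1 < p < n)%N then 0 else qE n.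
Proof.
move=> n2 p1n; rewrite /coE mulrBr mulr1 qE_E //.
by case: ifP; rewrite ?subrr ?subr0.
Qed.

Lemma coE_qE n p : (2 <= n)%N -> (1 <= p <= n)%N ->
  coE p%:Z * qE n = if (1 < p < n)%N then 0 else qE n.
Proof. by move=> n2 p1n; rewrite -comm_qE_coE qE_coE. Qed.

Lemma qE_coE1 n : (2 <= n)%N -> qE n * coE 1 = qE n.
Proof. by move=> n2; rewrite (qE_coE n2 (p := 1)) //=; lia. Qed.

Lemma coE1_qE n : (2 <= n)%N -> coE 1 * qE n = qE n.
Proof. by move=> n2; rewrite -comm_qE_coE qE_coE1. Qed.

Lemma qE_coEn n : (2 <= n)%N -> qE n * coE n%:Z = qE n.
Proof. by move=> n2; rewrite qE_coE ?ltnn ?andbF //; lia. Qed.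

Lemma coEn_qE n : (2 <= n)%N -> coE n%:Z * qE n = qE n.
Proof. by move=> n2; rewrite -comm_qE_coE qE_coEn. Qed.

Lemma qE_prodE n : (2 <= n)%N -> qE n * prodE n = qE n.
Proof.
move=> n2; rewrite /prodE.
have : all (fun i => 1 < i < n)%N (iota 2 (n - 2)).
  by apply/allP => i; rewrite mem_iota; lia.
elim: (iota 2 (n - 2)) => [|i s IH] /=; first by rewrite big_nil mulr1.
by move=> /andP[i1n /IH]; rewrite big_cons mulrA qE_E ?i1n //; lia.
Qed.

Lemma qE_idem n : (2 <= n)%N -> qE n * qE n = qE n.
Proof. by move=> n2; rewrite {2}/qE !mulrA qE_coE1 // qE_prodE // qE_coEn. Qed.

Lemma qE_T_qE n n' (i j : nat) : (2 <= n)%N -> (2 <= n')%N ->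
  (1 <= i < n)%N -> (1 <= j < n')%N ->
  qE n * T (- i%:Z) * (T j%:Z * qE n') = if (i == j) && (n == n') then qE n else 0.
Proof.
move=> n2 n'2 i1n j1n'; rewrite mulrA -(mulrA (qE n)) -TD.
have [ltij|ltji|<-] := ltngtP i j.
- have -> : - i%:Z + j%:Z = (j - i)%N by lia.
  rewrite -{1}(qE_coE1 n2) -(mulrA (qE n)) coE_T -!mulrA.
  have -> : 1 + (j - i)%N%:Z = (1 + (j - i))%N by lia.
  by rewrite coE_qE //; [case: ifP => h; rewrite ?mulr0 //; lia | lia].
- have -> : - i%:Z + j%:Z = - (i - j)%N%:Z by lia.
  rewrite -(coE1_qE n'2) mulrA -(mulrA (qE n)) T_coE mulrA.
  have -> : 1 - - (i - j)%N%:Z = (1 + (i - j))%N by lia.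
  by rewrite qE_coE //; [case: ifP => h; rewrite ?mul0r //; lia | lia].
- rewrite addNr T0 mulr1.
  have [ltn|ltn|<-] := ltngtP n n'; last by rewrite qE_idem.
  + rewrite -(qE_coEn n2) -mulrA coE_qE //; last lia.
    by case: ifP; rewrite ?mulr0 //; lia.
  + rewrite -(coEn_qE n'2) mulrA qE_coE //; last lia.
    by case: ifP; rewrite ?mul0r //; lia.
Qed.

Lemma hopping_T_qE n (k : nat) : (2 <= n)%N -> (k < n.-1)%N ->
  hopping * (T k.+1%:Z * qE n) =
    (if (k.+2 < n)%N then T k.+2%:Z * qE n else 0) +
    (if (0 < k)%N then T k%:Z * qE n else 0).
Proof.
move=> n2 kn; rewrite mulrDl; congr (_ + _).
- rewrite -mulrA (mulrA (T 1)) -TD mulrA E_T -mulrA add0r.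
  have -> : 1 + k.+1%:Z = k.+2 by lia.
  by rewrite E_qE //=; [case: ifP; rewrite ?mulr0 | lia].
- rewrite -mulrA (mulrA (E 0)) E_T -mulrA mulrA -TD add0r E_qE //=; last lia.
  have -> : -1 + k.+1%:Z = k by lia.
  have kn' : (k.+1 < n)%N by lia.
  by rewrite kn' andbT ltnS; case: ifP; rewrite ?mulr0.
Qed.

End TranslatedProjections.

Section WreathProduct.
Variable U : groupType.
Local Notation W := (wreath U).
Implicit Types (x y z : W) (u v : U) (i j k l : int).

Definition wcoord x : int -> U := sval x.1.

Lemma wreath_eq x y : wcoord x =1 wcoord y -> x.2 = y.2 -> x = y.
Proof.
case: x => [[f hf] a]; case: y => [[g hg] b]; rewrite /wcoord /= => /funext efg eab.
by subst g b; congr (_, _); congr exist; exact: Prop_irrelevance.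
Qed.

Lemma wmulA : associative (@wmul U).
Proof. by move=> x y z; apply: wreath_eq => [n|]; rewrite /wcoord /= ?mulgA ?addrA. Qed.

Lemma wmul1x : left_id (wone U) (@wmul U).
Proof. by move=> x; apply: wreath_eq => [n|]; rewrite /wcoord /= ?mul1g ?addr0 ?add0r. Qed.

Lemma wmulx1 : right_id (wone U) (@wmul U).
Proof. by move=> x; apply: wreath_eq => [n|]; rewrite /wcoord /= ?mulg1 ?addr0. Qed.

Lemma wmulVx : left_inverse (wone U) (@winv U) (@wmul U).
Proof. by move=> x; apply: wreath_eq => [n|]; rewrite /wcoord /= ?mulVg ?addNr. Qed.

Lemma wmulxV : right_inverse (wone U) (@winv U) (@wmul U).
Proof. by move=> x; apply: wreath_eq => [n|]; rewrite /wcoord /= ?addrK ?mulgV ?subrr. Qed.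

HB.instance Definition _ := gen_eqMixin W.
HB.instance Definition _ := gen_choiceMixin W.
HB.instance Definition _ := isGroup.Build W wmulA wmul1x wmulx1 wmulVx wmulxV.

Lemma wcoordM x y n : wcoord (x * y)%g n = (wcoord x n * wcoord y (n + x.2))%g.
Proof. by []. Qed.

Lemma wdegM x y : ((x * y)%g).2 = x.2 + y.2.
Proof. by []. Qed.

Lemma fin_supp_wdel j u : fin_supp (fun n : int => if n == j then u else 1%g).
Proof. by exists `|j|%N => n Hn; case: eqP => // e; subst n; rewrite ltnn in Hn. Qed.

Definition wdel j u : W := (exist _ _ (fin_supp_wdel j u), 0).
Definition wshift k : W := (exist _ _ (fin_supp_one U), k).

Lemma wdelM j : {morph wdel j : u v / (u * v)%g}.
Proof.
move=> u v; apply: wreath_eq => [n|] //; rewrite wcoordM addr0 /wcoord /=.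
by case: eqP; rewrite ?mulg1.
Qed.

Lemma wdel1 j : wdel j 1%g = 1%g.
Proof. by apply: wreath_eq => [n|] //=; rewrite /wcoord /=; case: eqP. Qed.

Lemma wdelV j : {morph wdel j : u / (u^-1)%g}.
Proof. by move=> u; apply/esym/mulg1_eq; rewrite -wdelM mulgV wdel1. Qed.

Lemma wdel_inj j : injective (wdel j).
Proof. by move=> u v /(congr1 (wcoord^~ j)); rewrite /wcoord /= eqxx. Qed.

Lemma wdel_comm i j u v : i != j -> (wdel i u * wdel j v = wdel j v * wdel i u)%g.
Proof.
move=> nij; apply: wreath_eq => [n|] //; rewrite !wcoordM !addr0 /wcoord /=.
case: (eqVneq n i) => [ni|ni]; case: (eqVneq n j) => [nj|nj]; rewrite ?mulg1 ?mul1g //.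
by move: nij; rewrite -ni -nj eqxx.
Qed.

Lemma wshiftD k l : wshift (k + l) = (wshift k * wshift l)%g.
Proof. by apply: wreath_eq => [n|] //; rewrite wcoordM /wcoord /= mulg1. Qed.

Lemma wshiftN k : wshift (- k) = ((wshift k)^-1)%g.
Proof. by apply/esym/mulg1_eq; rewrite -wshiftD subrr. Qed.

Lemma wshift_wdel k i u : (wshift k * wdel i u = wdel (i - k) u * wshift k)%g.
Proof.
apply: wreath_eq => [n|] /=; rewrite ?wdegM ?addr0 ?add0r //.
rewrite !wcoordM /wcoord /= mul1g mulg1.
by rewrite (can2_eq (addrK k) (subrK k)).
Qed.

Lemma wpow_wt (i : nat) : wpow (wt U) i = wshift i.
Proof.
elim: i => // i IH; rewrite /wpow /= -/(wpow _ i) IH.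
by rewrite -[wmul _ _]/(wshift 1 * wshift i)%g -wshiftD intS.
Qed.

Lemma wpow_winv_wt (i : nat) : wpow (winv (wt U)) i = wshift (- i%:Z).
Proof.
elim: i => // i IH; rewrite /wpow /= -/(wpow _ i) IH.
by rewrite -[wmul _ _]/((wshift 1)^-1 * wshift (- i%:Z))%g -wshiftN -wshiftD intS opprD.
Qed.

Lemma wemb_wdel : wemb (U := U) =1 wdel 0.
Proof. by move=> u; apply: wreath_eq. Qed.

Definition base_on (S : pred int) x :=
  x.2 = 0 /\ forall n, n \notin S -> wcoord x n = 1%g.

Lemma base_on_sub S S' x : {subset S <= S'} -> base_on S x -> base_on S' x.
Proof.
by move=> SS' [x2 x1]; split=> // n nS'; apply: x1; apply: contra nS'; exact: SS'.
Qed.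

Lemma base_on_mul_wdel S j x u : base_on S x -> base_on (predU1 j S) (x * wdel j u)%g.
Proof.
move=> [x2 x1]; split; first by rewrite wdegM x2.
move=> n; rewrite !inE negb_or => /andP[nj nS]; rewrite wcoordM x2 addr0 x1 //.
by rewrite /wcoord /= (negbTE nj) mulg1.
Qed.

Lemma base_on_mul_wdel_eq1 S j x u : base_on S x -> j \notin S ->
  ((x * wdel j u)%g = 1%g <-> x = 1%g /\ u = 1%g).
Proof.
move=> [x2 x1] jS; split => [xu1|[-> ->]]; last by rewrite wdel1 mulg1.
have u1 : u = 1%g.
  by have := congr1 (wcoord^~ j) xu1; rewrite wcoordM x2 addr0 x1 // /wcoord /= eqxx mul1g.
by move: xu1; rewrite u1 wdel1 mulg1.
Qed.

End WreathProduct.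

Arguments wshift {U} k.

Lemma sumr_ord_if_eq (V : nmodType) (N c : nat) (G : nat -> V) :
  \sum_(l < N) (if c == l :> nat then G l else 0) = if (c < N)%N then G c else 0.
Proof.
case: ltnP => [cN|Nc]; last first.
  by rewrite big1 // => l _; case: eqP => // cl; move: Nc; rewrite cl leqNgt ltn_ord.
rewrite (bigD1 (Ordinal cN)) //= eqxx big1 ?addr0 // => l.
by rewrite -val_eqE eq_sym => /negbTE ->.
Qed.

Section WreathProjections.
Variables (R : realType) (U : groupType).
Local Notation C := R[i].
Local Notation W := (wreath U).
Local Notation CW := (grpalg C W).
Variable e : galg C U.
Hypothesis e_proj : gprojection (@Umul U) (@Uinv U) e.

Definition Ew j : CW := map_galg (wdel j) e.
Definition Tw k : CW := cl (gof C (wshift k)).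

Lemma Ew_idem j : Ew j * Ew j = Ew j.
Proof. by rewrite -map_galgM; [apply: map_galg_eq; case: e_proj | exact: wdelM]. Qed.

Lemma Ew_star j : star (Ew j) = Ew j.
Proof. by rewrite -map_galg_star; [apply: map_galg_eq; case: e_proj | exact: wdelV]. Qed.

Lemma Ew_comm i j : GRing.comm (Ew i) (Ew j).
Proof.
have [->|nij] := eqVneq i j; first exact: commr_refl.
by apply: map_galg_comm => u v; exact: wdel_comm.
Qed.

Lemma wreath_translated : translated_projections Ew Tw.
Proof.
split.
- exact: Ew_idem.
- exact: Ew_comm.
- by move=> k l; rewrite /Tw wshiftD cl_gof_mul.
- by [].
- by move=> k j; apply: gof_map_galg => u; exact: wshift_wdel.
Qed.

Local Notation Fw := (coE Ew).
Local Notation Qw := (qE Ew).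

Lemma Fw_star j : star (Fw j) = Fw j.
Proof. by rewrite /coE starB star1 Ew_star. Qed.

Lemma prodE_star (s : seq nat) : star (\prod_(i <- s) Ew i%:Z) = \prod_(i <- s) Ew i%:Z.
Proof.
elim: s => [|i s IH]; first by rewrite !big_nil star1.
by rewrite !big_cons starM IH Ew_star (comm_prodE wreath_translated).
Qed.

Lemma Qw_star n : star (Qw n) = Qw n.
Proof. by rewrite {1}/qE !starM !Fw_star prodE_star mulrA (qE_rev wreath_translated). Qed.

Lemma Tw_star k : star (Tw k) = Tw (- k).
Proof. by rewrite /Tw wshiftN -cl_gstar /gstar /= conjC1. Qed.

Lemma cl_WM (a b : galg C W) : cl (WM a b) = cl a * cl b.
Proof. exact: clM. Qed.

Lemma cl_WS (a : galg C W) : cl (WS a) = star (cl a).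
Proof. exact: cl_gstar. Qed.

Lemma cl_embU (a : galg C U) : cl (embU a) = map_galg (wdel 0) a.
Proof. by rewrite /embU /map_galg /gmap; congr cl; apply: eq_map => x; rewrite wemb_wdel. Qed.

Lemma cl_tpos (i : nat) : cl (tpos R U i) = Tw i.
Proof. by rewrite /tpos wpow_wt. Qed.

Lemma cl_tneg (i : nat) : cl (tneg R U i) = Tw (- i%:Z).
Proof. by rewrite /tneg wpow_winv_wt. Qed.

Lemma cl_ei (i : nat) : cl (ei e i) = Ew i.
Proof.
rewrite /ei !cl_WM cl_tneg cl_embU cl_tpos (tp_shift_proj wreath_translated).
by rewrite -mulrA -(tp_shiftD wreath_translated) addNr mulr1 sub0r opprK.
Qed.

Lemma cl_fi (i : nat) : cl (fi e i) = Fw i.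
Proof. by rewrite /fi cl_gsub cl1 cl_ei. Qed.

Lemma cl_qn (n : nat) : cl (qn e n) = Qw n.
Proof.
rewrite /qn cl_WM cl_gprod !cl_fi big_map /qE /prodE.
by congr (_ * _ * _); apply: eq_bigr => i _; rewrite cl_ei.
Qed.

Lemma cl_Top : cl (Top e) = hopping Ew Tw.
Proof. by rewrite /Top /gadd cl_cat !cl_WM cl_embU cl_tpos cl_tneg. Qed.

Local Open Scope complex_scope.

Lemma conjC_realC (x : R) : (x%:C)^*%R = x%:C.
Proof. exact: conjc_real. Qed.

Definition rcomb n (v : nat -> R) : CW := \sum_(k < n.-1) (v k.+1)%:C *: (Tw k.+1 * Qw n).

Lemma cl_rmn beta m n : cl (rmn e beta m n) = rcomb n (beta n m).
Proof.
rewrite /rmn cl_flatten -subn1 -/(index_iota 1 n) big_add1 big_mkord.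
by apply: eq_bigr => k _; rewrite clZ cl_WM cl_tpos cl_qn.
Qed.

Lemma star_rcomb n v :
  star (rcomb n v) = \sum_(k < n.-1) (v k.+1)%:C *: (Qw n * Tw (- k.+1%:Z)).
Proof.
rewrite /rcomb star_sum; apply: eq_bigr => k _.
by rewrite starZ starM Qw_star Tw_star conjC_realC.
Qed.

Lemma rcomb_Qw n v : (2 <= n)%N -> rcomb n v * Qw n = rcomb n v.
Proof.
move=> n2; rewrite /rcomb mulr_suml; apply: eq_bigr => k _.
by rewrite -scalerAl -mulrA (qE_idem wreath_translated).
Qed.

Lemma star_rcomb_rcomb n n' v v' : (2 <= n)%N -> (2 <= n')%N ->
  star (rcomb n v) * rcomb n' v' =
  if n == n' then (\sum_(k < n.-1) v k.+1 * v' k.+1)%:C *: Qw n else 0.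
Proof.
move=> n2 n'2; rewrite star_rcomb /rcomb mulr_suml.
have term (k : 'I_n.-1) (l : 'I_n'.-1) :
    ((v k.+1)%:C *: (Qw n * Tw (- k.+1%:Z))) * ((v' l.+1)%:C *: (Tw l.+1 * Qw n'))
    = if (k == l :> nat) && (n == n') then (v k.+1 * v' l.+1)%:C *: Qw n else 0.
  rewrite -scalerAl -scalerAr scalerA -rmorphM.
  rewrite (qE_T_qE wreath_translated) // ?eqSS;
    try by case: n n2 k => // n _ k /=; rewrite ltnS.
  + by case: ifP; rewrite ?scaler0.
  + by case: n' n'2 l => // n' _ l /=; rewrite ltnS.
case: eqP => [en|nn']; last first.
  rewrite big1 // => k _; rewrite mulr_sumr big1 // => l _.
  by rewrite term (introF eqP nn') andbF.
subst n'; rewrite rmorph_sum scaler_suml; apply: eq_bigr => k _.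
rewrite mulr_sumr (eq_bigr _ (fun l _ => term k l)) (bigD1 k) //= !eqxx.
rewrite big1 ?addr0 // => l nlk.
by rewrite val_eqE eq_sym (negbTE nlk).
Qed.

Lemma Amx_sum n (k : 'I_n.-1) (X : nat -> CW) : (2 <= n)%N ->
  \sum_(l < n.-1) ((Amx R n) k l)%:C *: X l.+1 =
    (if (k.+2 < n)%N then X k.+2 else 0) + (if (0 < k)%N then X k else 0).
Proof.
move=> n2; under eq_bigr => l _ do rewrite mxE.
have -> : \sum_(l < n.-1) ((if (k.+1 == l) || (l.+1 == k) then 1 else 0 : R)%:C *: X l.+1)
    = \sum_(l < n.-1) ((if k.+1 == l :> nat then X l.+1 else 0) +
                       (if k == l.+1 :> nat then X l.+1 else 0)).
  apply: eq_bigr => l _; rewrite (eq_sym l.+1).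
  by case: eqP => kl; case: eqP => lk /=; rewrite ?scale1r ?scale0r ?addr0 ?add0r //; lia.
rewrite big_split /= (sumr_ord_if_eq _ k.+1 (fun i => X i.+1)); congr (_ + _).
  by rewrite -ltnS prednK // ltnW.
case: k => [[|k] kn] /=; first by apply: big1.
under eq_bigr => l _ do rewrite eqSS.
by rewrite (sumr_ord_if_eq _ k (fun i => X i.+1)) (ltnW kn).
Qed.

Lemma hopping_rcomb n v : (2 <= n)%N ->
  hopping Ew Tw * rcomb n v =
  \sum_(l < n.-1) (\sum_(k < n.-1) v k.+1 * Amx R n k l)%:C *: (Tw l.+1 * Qw n).
Proof.
move=> n2; rewrite /rcomb mulr_sumr.
under eq_bigr => k _ do
  rewrite -scalerAr (hopping_T_qE wreath_translated) //
          -(Amx_sum k (fun p => Tw p%:Z * Qw n)) // scaler_sumr.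
rewrite exchange_big /=; apply: eq_bigr => l _.
by rewrite rmorph_sum scaler_suml; apply: eq_bigr => k _; rewrite scalerA rmorphM.
Qed.

Variable beta : nat -> nat -> nat -> R.
Hypothesis B_orth : forall n : nat, (2 <= n)%N ->
  (Bmx beta n)^T *m Bmx beta n = 1%:M /\ Bmx beta n *m (Bmx beta n)^T = 1%:M.
Hypothesis B_diag : forall n : nat, (2 <= n)%N ->
  Bmx beta n *m Amx R n *m (Bmx beta n)^T = diag_mx (\row_(i < n.-1) lam R i.+1 n).

Lemma beta_orthonormal n m m' :
  (2 <= n)%N -> (1 <= m <= n.-1)%N -> (1 <= m' <= n.-1)%N ->
  \sum_(k < n.-1) beta n m k.+1 * beta n m' k.+1 = (m == m')%:R.
Proof.
move=> n2; case: m => // m /= mn; case: m' => // m' /= m'n.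
have := congr1 (fun M : 'M[R]_(n.-1) => M (Ordinal mn) (Ordinal m'n)) (proj2 (B_orth n2)).
rewrite !mxE eqSS -[m == m']/(Ordinal mn == Ordinal m'n) => <-.
by apply: eq_bigr => k _; rewrite !mxE.
Qed.

Lemma beta_eigen n m (l : 'I_n.-1) : (2 <= n)%N -> (1 <= m <= n.-1)%N ->
  \sum_(k < n.-1) beta n m k.+1 * Amx R n k l = lam R m n * beta n m l.+1.
Proof.
move=> n2; case: m => // m /= mn.
have BA : Bmx beta n *m Amx R n = diag_mx (\row_(i < n.-1) lam R i.+1 n) *m Bmx beta n.
  by rewrite -B_diag // -!mulmxA (proj1 (B_orth n2)) mulmx1.
have := congr1 (fun M : 'M[R]_(n.-1) => M (Ordinal mn) l) BA.
rewrite mul_diag_mx !mxE => H.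
transitivity (\sum_j Bmx beta n (Ordinal mn) j * Amx R n j l).
  by apply: eq_bigr => k _; rewrite /Bmx mxE.
by rewrite H /Bmx ?mxE.
Qed.

Definition pcomb n m := rcomb n (beta n m) * star (rcomb n (beta n m)).

Lemma cl_pmn m n : cl (pmn e beta m n) = pcomb n m.
Proof. by rewrite /pmn cl_WM cl_WS cl_rmn. Qed.

Lemma star_rcomb_rcomb_beta n m n' m' : (2 <= n)%N -> (1 <= m <= n.-1)%N ->
  (2 <= n')%N -> (1 <= m' <= n'.-1)%N ->
  star (rcomb n (beta n m)) * rcomb n' (beta n' m') =
  if (n == n') && (m == m') then Qw n else 0.
Proof.
move=> n2 mn n'2 m'n'; rewrite star_rcomb_rcomb //.
case: eqP => [en|] //=; subst n'; rewrite beta_orthonormal //.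
by case: eqP => _; rewrite /= ?rmorph1 ?rmorph0 ?scale1r ?scale0r.
Qed.

Lemma pcomb_star n m : star (pcomb n m) = pcomb n m.
Proof. by rewrite /pcomb starM starK. Qed.

Lemma pcomb_idem n m : (2 <= n)%N -> (1 <= m <= n.-1)%N -> pcomb n m * pcomb n m = pcomb n m.
Proof.
move=> n2 mn; rewrite /pcomb mulrA -(mulrA (rcomb _ _)) star_rcomb_rcomb_beta // !eqxx.
by rewrite rcomb_Qw.
Qed.

Lemma pcomb_orth n m n' m' : (2 <= n)%N -> (1 <= m <= n.-1)%N ->
  (2 <= n')%N -> (1 <= m' <= n'.-1)%N -> (n, m) <> (n', m') -> pcomb n m * pcomb n' m' = 0.
Proof.
move=> n2 mn n'2 m'n' nm; rewrite /pcomb mulrA -(mulrA (rcomb _ _)) star_rcomb_rcomb_beta //.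
case: eqP => [enn|]; case: eqP => [emm|] /=; rewrite ?mulr0 ?mul0r //.
by case: nm; rewrite enn emm.
Qed.

Lemma trace_pcomb n m : (2 <= n)%N -> (1 <= m <= n.-1)%N -> trace (pcomb n m) = trace (Qw n).
Proof. by move=> n2 mn; rewrite /pcomb traceC star_rcomb_rcomb_beta // !eqxx. Qed.

Lemma hopping_pcomb n m : (2 <= n)%N -> (1 <= m <= n.-1)%N ->
  hopping Ew Tw * pcomb n m = (lam R m n)%:C *: pcomb n m.
Proof.
move=> n2 mn; rewrite /pcomb mulrA hopping_rcomb // scalerAl; congr (_ * _).
rewrite /rcomb scaler_sumr; apply: eq_bigr => l _.
by rewrite (beta_eigen l n2 mn) scalerA rmorphM.
Qed.

End WreathProjections.

Section WreathTrace.
Variables (R : realType) (U : groupType).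
Local Notation C := R[i].
Local Notation W := (wreath U).
Local Notation CW := (grpalg C W).
Implicit Types (q : CW) (S : pred int) (b : galg C U).

Definition base_supported q S := forall g, coef q g != 0 -> base_on S g.

Lemma base_supported_sub q S S' :
  {subset S <= S'} -> base_supported q S -> base_supported q S'.
Proof. by move=> SS' qS g /qS; apply: base_on_sub. Qed.

Lemma base_supported1 : base_supported 1 pred0.
Proof. by move=> g; rewrite coef_cl gcoef_gof; case: asboolP => [<- _|]; rewrite ?eqxx. Qed.

Lemma base_supported_mul_wdel q S j b :
  base_supported q S -> base_supported (q * map_galg (wdel j) b) (predU1 j S).
Proof.
move=> qS g; rewrite coef_mul => /gpair_neq0 [h []]; rewrite gcoef_rep => /qS hS.
move=> /coef_map_galg_neq0 [u hu]; have -> : g = (h * wdel j u)%g by rewrite hu mulVKg.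
exact: base_on_mul_wdel.
Qed.

Lemma trace_mul_wdel q S j b : base_supported q S -> j \notin S ->
  trace (q * map_galg (wdel j) b) = trace q * gcoef b 1%g.
Proof.
move=> qS jS; rewrite /trace coef_mul.
rewrite (@gpair_congr _ _ _ _ (fun h => (if `[< h = 1%g >] then 1 else 0) * gcoef b 1%g)).
  by rewrite -gcoef_rep gcoefE /gpair mulr_suml; apply: eq_bigr => x _; rewrite mulrA.
move=> h; rewrite gcoef_rep mulg1 => /qS hS.
case: asboolP => [->|h1].
  by rewrite invg1 mul1r -(wdel1 _ j) coef_map_galg //; exact: wdel_inj.
rewrite mul0r; apply/eqP; apply: contraT => /coef_map_galg_neq0 [u hu].
have /(base_on_mul_wdel_eq1 _ hS jS) [] : (h * wdel j u = 1)%g by rewrite hu mulgV.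
by move/h1.
Qed.

Lemma trace_prod_wdel (s : seq int) (b : int -> galg C U) : uniq s ->
  base_supported (\prod_(j <- s) map_galg (wdel j) (b j)) (mem s) /\
  trace (\prod_(j <- s) map_galg (wdel j) (b j)) = \prod_(j <- s) gcoef (b j) 1%g.
Proof.
elim/last_ind: s => [|s j IH]; rewrite ?rcons_uniq.
  by rewrite !big_nil trace1; split=> //; exact: (base_supported_sub _ base_supported1).
move=> /andP[js /IH [sS trs]]; rewrite -cats1 !big_cat !big_seq1; split.
  apply: (base_supported_sub _ (base_supported_mul_wdel sS)) => k.
  by rewrite !inE mem_cat mem_seq1 orbC.
by have := trace_mul_wdel (b j) sS js; rewrite trs.
Qed.

End WreathTrace.

Section TraceOfProjections.
Variables (R : realType) (U : groupType) (e : galg R[i] U).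
Local Notation tau := (gcoef e 1%g).

Lemma coE_Ew j : coE (Ew e) j = map_galg (wdel j) (gsub (gof R[i] 1%g) e).
Proof. by rewrite map_galgB map_galg1 //; exact: wdel1. Qed.

Lemma trace_Qw n : (2 <= n)%N -> trace (qE (Ew e) n) = (1 - tau) ^+ 2 * tau ^+ (n - 2).
Proof.
move=> n2; set f := gsub (gof R[i] 1%g) e.
pose b j := if (j == 1) || (j == n%:Z) then f else e.
have mid_b : {in iota 2 (n - 2), forall i : nat, b i%:Z = e}.
  by move=> i; rewrite mem_iota => i2n; rewrite /b; case: eqP; case: eqP => //; lia.
have [b1 bn] : b 1 = f /\ b n = f by rewrite /b !eqxx orbT.
pose s := 1 :: iota 2 (n - 2) ++ [:: n].
have s_uniq : uniq [seq i%:Z | i <- s].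
  rewrite map_inj_uniq; last by move=> ? ? [].
  by rewrite /s /= cat_uniq iota_uniq mem_cat !mem_iota !mem_seq1 /= mem_iota; lia.
have Q_prod : qE (Ew e) n = \prod_(j <- [seq i%:Z | i <- s]) map_galg (wdel j) (b j).
  rewrite big_map /s big_cons big_cat big_seq1 /qE /prodE !coE_Ew b1 bn mulrA.
  by congr (_ * _ * _); apply: eq_big_seq => i /mid_b ->.
rewrite Q_prod; have [_ ->] := trace_prod_wdel b s_uniq.
rewrite big_map /s big_cons big_cat big_seq1 /= b1 bn.
rewrite (eq_big_seq (fun=> tau)); last by move=> i /mid_b ->.
rewrite -/(index_iota 2 n) prodr_const_nat /f gcoef_gsub gcoef_gof asboolT //.
ring.
Qed.

Hypothesis e_proj : gprojection (@Umul U) (@Uinv U) e.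
Hypothesis e_ne0 : ~ ga_eq e (gzero R[i] U).
Hypothesis e_ne1 : ~ ga_eq e (gof R[i] 1%g).

Lemma tau_gt0 : 0 < tau.
Proof.
rewrite -(trace_map_galg e (@wdel_inj _ 0)) ?wdel1 //.
apply: trace_proj_gt0; [exact: Ew_idem | exact: Ew_star |].
by apply/eqP => /(map_galg_eq0 (@wdel_inj _ 0)).
Qed.

Lemma tau_lt1 : tau < 1.
Proof.
rewrite -subr_gt0.
have -> : 1 - tau = gcoef (gsub (gof R[i] 1%g) e) 1%g by rewrite gcoef_gsub gcoef_gof asboolT.
rewrite -(trace_map_galg _ (@wdel_inj _ 0)) ?wdel1 // -coE_Ew.
apply: trace_proj_gt0; [exact: (coE_idem (wreath_translated e_proj)) | exact: Fw_star |].
rewrite coE_Ew; apply/eqP => /(map_galg_eq0 (@wdel_inj _ 0)) f0; apply: e_ne1 => u.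
by move: (f0 u); rewrite gcoef_gsub gcoef_nil => /eqP; rewrite subr_eq0 => /eqP <-.
Qed.

Variable beta : nat -> nat -> nat -> R.
Hypothesis B_orth : forall n : nat, (2 <= n)%N ->
  (Bmx beta n)^T *m Bmx beta n = 1%:M /\ Bmx beta n *m (Bmx beta n)^T = 1%:M.

Lemma gtr_pmn n m : (2 <= n)%N -> (1 <= m <= n.-1)%N ->
  gtr (wone U) (pmn e beta m n) = (1 - tau) ^+ 2 * tau ^+ (n - 2).
Proof.
move=> n2 mn; rewrite /gtr -trace_cl (cl_pmn e_proj).
by rewrite (trace_pcomb e_proj B_orth n2 mn) trace_Qw.
Qed.

End TraceOfProjections.

Section WeightLimit.
Variable R : realType.

Lemma bernoulli_ineq (y : R) (n : nat) : 0 <= y -> 1 + n%:R * y <= (1 + y) ^+ n.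
Proof.
move=> y0; elim: n => [|n IH]; first by rewrite mul0r addr0 expr0.
have y1 : 0 <= 1 + y by lra.
have n0 : 0 <= n%:R :> R by [].
rewrite exprS; apply: le_trans (ler_wpM2l y1 IH).
by rewrite -natr1; nra.
Qed.

Lemma cvg_natmul_expr (t : R) : 0 < t -> t < 1 -> (fun n : nat => n%:R * t ^+ n) @ \oo --> 0.
Proof.
move=> t0 t1; set s := Num.sqrt t.
have s0 : 0 < s by rewrite sqrtr_gt0.
have s1 : s < 1 by rewrite -sqrtr1 ltr_sqrt.
set y := s^-1 - 1.
have y0 : 0 < y by rewrite subr_gt0 invf_gt1.
have sy : s * (1 + y) = 1 by rewrite addrC subrK mulfV ?gt_eqF.
(* Bernoulli for [1 + y = 1 / s] bounds [n s^n] by [1 / y], and [t^n = s^n s^n]. *)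
have bound n : n%:R * t ^+ n <= y^-1 * s ^+ n.
  have key : n%:R * y * s ^+ n <= 1.
    have := ler_wpM2l (exprn_ge0 n (ltW s0)) (bernoulli_ineq n (ltW y0)).
    rewrite -exprMn sy expr1n.
    have := exprn_ge0 n (ltW s0); nra.
  have -> : t ^+ n = s ^+ n * s ^+ n by rewrite -exprMn -expr2 sqr_sqrtr // ltW.
  have u0 := exprn_ge0 n (ltW s0); move: key u0; set u := s ^+ n => key u0.
  have -> : n%:R * (u * u) = n%:R * y * u * (y^-1 * u).
    by field; rewrite gt_eqF.
  rewrite -[leRHS]mul1r; apply: ler_wpM2r key.
  by rewrite mulr_ge0 // invr_ge0 ltW.
apply: (@squeeze_cvgr _ _ _ _ (cst 0) (fun n => y^-1 * s ^+ n)).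
- by apply: nearW => n /=; rewrite bound andbT mulr_ge0 // exprn_ge0 // ltW.
- exact: cvg_cst.
- by rewrite -(mulr0 y^-1); apply: cvgMr; apply: cvg_expr; rewrite gtr0_norm.
Qed.

Lemma weight_sum_closed (t : R) (N : nat) :
  \sum_(2 <= n < N.+2) ((1 - t) ^+ 2 * t ^+ (n - 2)) *+ (n - 1) =
  1 - N.+1%:R * t ^+ N + N%:R * t ^+ N.+1.
Proof.
elim: N => [|N IH]; first by rewrite big_geq // expr0 mulr1 mul0r addr0 subrr.
rewrite big_nat_recr //= IH.
have -> : (N.+2 - 2 = N)%N by lia.
have -> : (N.+2 - 1 = N.+1)%N by lia.
rewrite -mulr_natl -!natr1 !exprS.
ring.
Qed.

Lemma cvg_weight_sum (t : R) : 0 < t -> t < 1 ->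
  (fun N => \sum_(2 <= n < N) ((1 - t) ^+ 2 * t ^+ (n - 2)) *+ (n - 1)) @ \oo --> (1 : R).
Proof.
move=> t0 t1; rewrite -(cvg_shiftn 2).
have -> : (fun N => \sum_(2 <= n < N + 2) ((1 - t) ^+ 2 * t ^+ (n - 2)) *+ (n - 1)) =
    (fun N => 1 - (N%:R * t ^+ N + t ^+ N) + t * (N%:R * t ^+ N)).
  by apply: funext => N; rewrite addn2 weight_sum_closed -natr1 exprS; ring.
suff : (fun N : nat => 1 - (N%:R * t ^+ N + t ^+ N) + t * (N%:R * t ^+ N)) @ \oo
    --> (1 - (0 + 0) + t * 0 : R) by rewrite mulr0 !addr0 subr0.
apply: cvgD; last exact: cvgMr (cvg_natmul_expr t0 t1).
apply: cvgB; first exact: cvg_cst.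
by apply: cvgD; [exact: cvg_natmul_expr | apply: cvg_expr; rewrite gtr0_norm].
Qed.

Local Open Scope complex_scope.

Lemma cvg_realC (u : R ^nat) (l : R) : u @ \oo --> l ->
  ((fun n => (u n)%:C) : (R[i])^o ^nat) @ \oo --> (l%:C : (R[i])^o).
Proof.
move/cvgrPdist_lt => ul; apply/cvgrPdist_lt => eps eps0.
have /complex_realP [r er] : eps \is Num.real by apply: gtr0_real.
subst eps; have r0 : 0 < r by rewrite -ltcR.
apply: filterS (ul r r0) => n /=.
by rewrite -rmorphB normc_def /= expr0n addr0 sqrtr_sqr ltcR.
Qed.

End WeightLimit.

Local Open Scope complex_scope.
Unset Implicit Arguments.

Theorem lemma3p3 (R : realType) (U : groupType)
  (torsion : exists u : U, u != 1%g /\ exists k : nat, (0 < k)%N /\ (u ^+ k)%g = 1%g)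
  (e : galg R[i] U)
  (e_proj : gprojection (@Umul U) (@Uinv U) e)
  (e_ne0 : ~ ga_eq e (gzero R[i] U))
  (e_ne1 : ~ ga_eq e (@gof R[i] U 1%g))
  (beta : nat -> nat -> nat -> R)
  (B_orth : forall n : nat, (2 <= n)%N ->
     (Bmx beta n)^T *m Bmx beta n = 1%:M /\ Bmx beta n *m (Bmx beta n)^T = 1%:M)
  (B_diag : forall n : nat, (2 <= n)%N ->
     Bmx beta n *m Amx R n *m (Bmx beta n)^T
       = diag_mx (\row_(i < n.-1) lam R i.+1 n)) :
  (* each p_(m,n) is a projection *)
  (forall n m : nat, (2 <= n)%N -> (1 <= m <= n.-1)%N ->
     gprojection (@wmul U) (@winv U) (pmn e beta m n)) /\
  (* pairwise orthogonal *)
  (forall n m n' m' : nat, (2 <= n)%N -> (1 <= m <= n.-1)%N ->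
     (2 <= n')%N -> (1 <= m' <= n'.-1)%N -> (n, m) <> (n', m') ->
     ga_eq (WM (pmn e beta m n) (pmn e beta m' n')) (gzero R[i] (wreath U))) /\
  (* complete: sum_(n>=2) sum_(m=1)^(n-1) tr(p_(m,n)) = 1 *)
  ((fun N : nat => (\sum_(2 <= n < N) \sum_(1 <= m < n)
        gtr (wone U) (pmn e beta m n) : (R[i])^o))
     @ \oo --> (1 : (R[i])^o)) /\
  (* T p_(m,n) = lambda_(m,n) p_(m,n) *)
  (forall n m : nat, (2 <= n)%N -> (1 <= m <= n.-1)%N ->
     ga_eq (WM (Top e) (pmn e beta m n))
         (gscale ((lam R m n)%:C) (pmn e beta m n))).
Proof.
(* [torsion] only ensures that nontrivial projections exist. *)
split; [|split; [|split]].
- move=> n m n2 mn; apply/gprojectionP; rewrite (cl_pmn e_proj).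
  exact: (conj (pcomb_star _ _ _ _) (pcomb_idem e_proj B_orth n2 mn)).
- move=> n m n' m' n2 mn n'2 m'n' nm; apply/clP.
  by rewrite cl_WM !(cl_pmn e_proj); exact: pcomb_orth.
- have /complex_realP [t tE] : gcoef e 1%g \is Num.real by exact/gtr0_real/tau_gt0.
  have t0 : 0 < t by rewrite -ltcR -tE tau_gt0.
  have t1 : t < 1 by rewrite -ltcR -tE tau_lt1.
  apply: cvg_trans (cvg_realC (cvg_weight_sum t0 t1)); apply: near_eq_cvg.
  apply: nearW => N /=; rewrite rmorph_sum; apply: eq_big_nat => n /andP[n2 _].
  rewrite rmorphMn -sumr_const_nat; apply: eq_big_nat => m /andP[m1 mn].
  have m1n : (1 <= m <= n.-1)%N by lia.
  by rewrite (gtr_pmn e_proj B_orth n2 m1n) tE rmorphM !rmorphXn rmorphB rmorph1.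
- move=> n m n2 mn; apply/clP.
  by rewrite cl_WM clZ cl_Top (cl_pmn e_proj); exact: hopping_pcomb.
Qed.
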